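(* Let $f,g:2^{[n]}\to\mathbb N$ be monotone (decreasing) functions with $|f|\le|g|$. Then there is a function $p:2^{[n]}\times 2^{[n]}\to\mathbb N$ such that (i) $p(X,Y)\neq 0$ only if $X,Y\subset[n]$ are disjoint; (ii) $|p|=|f|$; (iii) $\sum_{X\subset[n]}p(X,Y)\le g(Y)$ for every $Y\subset[n]$, and $\sum_{Y\subset[n]}p(X,Y)=f(X)$ for every $X\subset[n]$.
   Context: $\mathbb N$ includes $0$; $[n]=\{1,\dots,n\}$. A function $f:2^{[n]}\to\mathbb N$ is monotone (decreasing) if $f(A)\le f(A\setminus\{i\})$ for every set $A\subset[n]$ and element $i$. For $f:2^{[n]}\to\mathbb N$, $|f|=\sum_{X\subset[n]}f(X)$; for $p:2^{[n]}\times2^{[n]}\to\mathbb N$, $|p|=\sum_{X,Y\subset[n]}p(X,Y)$. *)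

From mathcomp Require Import all_boot.
Set Implicit Arguments. Unset Strict Implicit. Unset Printing Implicit Defensive.

(* Subsets of [n] = {1..n} are modelled as {set 'I_n} (n elements). *)

Definition monotone_dec (n : nat) (f : {set 'I_n} -> nat) : Prop :=
  forall (A : {set 'I_n}) (i : 'I_n), f A <= f (A :\ i).

Definition fsize (n : nat) (f : {set 'I_n} -> nat) : nat :=
  \sum_(X : {set 'I_n}) f X.

Definition psize (n : nat) (p : {set 'I_n} -> {set 'I_n} -> nat) : nat :=
  \sum_(X : {set 'I_n}) \sum_(Y : {set 'I_n}) p X Y.

From mathcomp Require Import all_boot zify.
Set Implicit Arguments. Unset Strict Implicit. Unset Printing Implicit Defensive.

(* Read p as a transportation plan on the bipartite graph "X and Y are
   disjoint", with supply f and capacities g.  By the supply-demand form of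
   Hall's theorem it suffices that every family S satisfies
   sum_S f <= sum_(N(S)) g.  Replacing S by its up-closure U only increases the
   left side and leaves N(S) = {Y | ~Y \in U} unchanged.  The Harris-Kleitman
   inequality says that a decreasing function has a smaller average on an
   up-set than overall; applied to f on U and to g on the up-set complementary
   to N(S), it turns |f| <= |g| into the required bound. *)

Lemma leq_sum_subset (T : finType) (A B : {pred T}) (F : T -> nat) :
  A \subset B -> \sum_(x in A) F x <= \sum_(x in B) F x.
Proof. by move=> /subsetP; apply: (@sub_le_big nat addn leq leqnn (fun x y => leq_addr y x)). Qed.

Lemma sum_pred1 (T : finType) (P : pred T) (x0 : T) :
  \sum_(x | P x) (x == x0) = P x0.
Proof.
case Px0: (P x0); last by rewrite big1 // => x; case: eqP => // ->; rewrite Px0.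
by rewrite (bigD1 x0) //= eqxx big1 // => x /andP[_ /negbTE ->].
Qed.

Lemma subnK_pred1 (T : eqType) (h : T -> nat) (x0 x : T) :
  0 < h x0 -> h x - (x == x0) + (x == x0) = h x.
Proof. by case: eqP => [->|]; rewrite ?subn0 ?addn0 // => /subnK. Qed.

Lemma sum_subn_pred1 (T : finType) (P : pred T) (h : T -> nat) (x0 : T) :
  0 < h x0 -> \sum_(x | P x) h x = \sum_(x | P x) (h x - (x == x0)) + P x0.
Proof.
move=> h_x0; rewrite -(sum_pred1 P x0) -big_split.
by apply: eq_bigr => x _; exact/esym/subnK_pred1.
Qed.

Definition restrict (T : finType) (A : {set T}) (h : T -> nat) (x : T) : nat :=
  if x \in A then h x else 0.

Lemma restrictC (T : finType) (A : {set T}) (h : T -> nat) (x : T) :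
  restrict A h x + restrict (~: A) h x = h x.
Proof. by rewrite /restrict inE; case: (x \in A); rewrite ?addn0. Qed.

Lemma sum_restrict (T : finType) (R A : {set T}) (h : T -> nat) :
  \sum_(x in R) restrict A h x = \sum_(x in R :&: A) h x.
Proof. by rewrite -big_mkcondr; apply: eq_bigl => x; rewrite inE. Qed.

Lemma sum_restrictT (T : finType) (A : {set T}) (h : T -> nat) :
  \sum_x restrict A h x = \sum_(x in A) h x.
Proof. by rewrite [RHS]big_mkcond. Qed.

Lemma sum_setU_split (T : finType) (A B : {set T}) (h : T -> nat) :
  \sum_(x in A :|: B) h x = \sum_(x in B) h x + \sum_(x in A :\: B) h x.
Proof. by rewrite (big_setID B) (setIidPr (subsetUr _ _)) setDUl setDv setU0. Qed.

Section SupplyDemand.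

Variables (I J : finType) (E : I -> J -> bool).

Definition neighbours (S : {set I}) : {set J} := [set y | [exists x in S, E x y]].

Definition hall_condition (f : I -> nat) (g : J -> nat) : Prop :=
  forall S : {set I}, \sum_(x in S) f x <= \sum_(y in neighbours S) g y.

Definition is_transport (f : I -> nat) (g : J -> nat) (p : I -> J -> nat) : Prop :=
  [/\ forall x y, p x y != 0 -> E x y,
      forall y, \sum_x p x y <= g y &
      forall x, \sum_y p x y = f x].

Lemma neighboursP (S : {set I}) (y : J) :
  reflect (exists2 x, x \in S & E x y) (y \in neighbours S).
Proof.
by rewrite inE; apply: (iffP existsP) => [[x /andP[]]|[x xS Exy]]; exists x => //; apply/andP.
Qed.

Lemma neighboursS (A B : {set I}) : A \subset B -> neighbours A \subset neighbours B.
Proof.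
move=> sAB; apply/subsetP => y /neighboursP[x xA Exy].
by apply/neighboursP; exists x; first exact: (subsetP sAB).
Qed.

Lemma neighboursU (A B : {set I}) :
  neighbours (A :|: B) = neighbours A :|: neighbours B.
Proof.
apply/setP => y; rewrite in_setU; apply/neighboursP/orP.
  by case=> x /setUP[xA|xB] Exy; [left|right]; apply/neighboursP; exists x.
by case=> /neighboursP[x xS Exy]; exists x; rewrite // inE xS ?orbT.
Qed.

Lemma is_transport0 (f : I -> nat) (g : J -> nat) :
  (forall x, f x = 0) -> is_transport f g (fun _ _ => 0).
Proof. by move=> f0; split=> [//|y|x]; rewrite ?f0 big1_eq. Qed.

Lemma is_transport_pred1 (x0 : I) (y0 : J) : E x0 y0 ->
  is_transport (fun x => x == x0) (fun y => y == y0) (fun x y => (x == x0) * (y == y0)).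
Proof.
move=> Exy; split.
- by move=> x y; case: (x =P x0) => [->|_]; case: (y =P y0) => [->|_]; rewrite ?muln0.
- by move=> y; rewrite -big_distrl /= sum_pred1 mul1n.
- by move=> x; rewrite -big_distrr /= sum_pred1 muln1.
Qed.

Lemma is_transportD (f f1 f2 : I -> nat) (g g1 g2 : J -> nat) (p1 p2 : I -> J -> nat) :
  (forall x, f x = f1 x + f2 x) -> (forall y, g1 y + g2 y <= g y) ->
  is_transport f1 g1 p1 -> is_transport f2 g2 p2 ->
  is_transport f g (fun x y => p1 x y + p2 x y).
Proof.
move=> ef eg [E1 c1 r1] [E2 c2 r2]; split.
- by move=> x y; rewrite addn_eq0 negb_and => /orP[/E1|/E2].
- by move=> y; rewrite big_split /=; apply: leq_trans (eg y); exact: leq_add.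
- by move=> x; rewrite big_split /= r1 r2 ef.
Qed.

Lemma hall_condition_restrict (f : I -> nat) (g : J -> nat) (S : {set I}) :
  hall_condition f g -> hall_condition (restrict S f) (restrict (neighbours S) g).
Proof.
move=> hfg R; rewrite !sum_restrict; apply: leq_trans (hfg _) (leq_sum_subset _ _).
by rewrite subsetI !neighboursS ?subsetIl ?subsetIr.
Qed.

Lemma hall_condition_contract (f : I -> nat) (g : J -> nat) (S : {set I}) :
  hall_condition f g -> \sum_(x in S) f x = \sum_(y in neighbours S) g y ->
  hall_condition (restrict (~: S) f) (restrict (~: neighbours S) g).
Proof.
move=> hfg tightS R; rewrite !sum_restrict -!setDE.
by have := hfg (R :|: S); rewrite neighboursU !sum_setU_split tightS leq_add2l.
Qed.

Lemma hall_condition_edge (f : I -> nat) (g : J -> nat) (x0 : I) :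
  hall_condition f g -> 0 < f x0 -> exists2 y0, E x0 y0 & 0 < g y0.
Proof.
move=> hfg fx0; have := hfg [set x0]; rewrite big_set1 => /(leq_trans fx0).
rewrite lt0n sum_nat_eq0 => /forallPn[y]; rewrite negb_imply -lt0n.
by case/andP=> /neighboursP[x /set1P-> Exy] gy; exists y.
Qed.

Lemma hall_condition_pred1 (f : I -> nat) (g : J -> nat) (x0 : I) (y0 : J) :
  hall_condition f g ->
  (forall S : {set I}, 0 < \sum_(x in S) f x < \sum_x f x ->
     \sum_(x in S) f x < \sum_(y in neighbours S) g y) ->
  E x0 y0 -> 0 < f x0 -> 0 < g y0 ->
  hall_condition (fun x => f x - (x == x0)) (fun y => g y - (y == y0)).
Proof.
move=> hfg no_crit Exy fx0 gy0 R.
have sum_f := sum_subn_pred1 (fun x => x \in R) fx0.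
have sum_g := sum_subn_pred1 (fun y => y \in neighbours R) gy0.
have [x0R|x0R] := boolP (x0 \in R).
  have y0R : y0 \in neighbours R by apply/neighboursP; exists x0.
  by have := hfg R; rewrite sum_f sum_g x0R y0R leq_add2r.
rewrite (negbTE x0R) addn0 in sum_f; rewrite -sum_f.
have [-> //|fR_gt0] := posnP (\sum_(x in R) f x).
have fR_lt : \sum_(x in R) f x < \sum_x f x.
  rewrite (bigID (mem R) predT) /= -[X in X < _]addn0 ltn_add2l.
  by rewrite (bigD1 x0) //= addn_gt0 fx0.
have := no_crit R; rewrite fR_gt0 fR_lt sum_g => /(_ isT).
by case: (y0 \in neighbours R) => /=; lia.
Qed.

Theorem hall_transport (f : I -> nat) (g : J -> nat) :
  hall_condition f g -> exists p, is_transport f g p.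
Proof.
have [m] := ubnP (\sum_x f x); elim: m f g => // m IH f g lt_fm hfg.
have {}IH f' g' : \sum_x f' x < \sum_x f x -> hall_condition f' g' ->
    exists p, is_transport f' g' p.
  by move=> lt_f'; apply: IH; apply: leq_trans lt_f' _; rewrite -ltnS.
have [/existsP[S /andP[/andP[fS_gt0 fS_lt] gS_le]]|/existsPn crit] := boolP
  [exists S : {set I}, (0 < \sum_(x in S) f x < \sum_x f x)
             && (\sum_(y in neighbours S) g y <= \sum_(x in S) f x)].
  have tightS : \sum_(x in S) f x = \sum_(y in neighbours S) g y.
    by apply/eqP; rewrite eqn_leq hfg gS_le.
  have [p1 tp1] : exists p, is_transport (restrict S f) (restrict (neighbours S) g) p.
    by apply: IH (hall_condition_restrict S hfg); rewrite sum_restrictT.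
  have [p2 tp2] :
      exists p, is_transport (restrict (~: S) f) (restrict (~: neighbours S) g) p.
    apply: IH (hall_condition_contract hfg tightS).
    have -> : \sum_x f x = \sum_(x in S) f x + \sum_x restrict (~: S) f x.
      by rewrite -(sum_restrictT S) -big_split; apply: eq_bigr => x _; exact/esym/restrictC.
    by rewrite -[X in X < _]add0n ltn_add2r.
  by exists (fun x y => p1 x y + p2 x y); apply: is_transportD tp1 tp2 => ?; rewrite restrictC.
have no_crit (S : {set I}) : 0 < \sum_(x in S) f x < \sum_x f x ->
    \sum_(x in S) f x < \sum_(y in neighbours S) g y.
  by move=> hS; move: (crit S); rewrite hS ltnNge.
have [x0 fx0|f0] := pickP (fun x => 0 < f x); last first.
  by exists (fun _ _ => 0); apply: is_transport0 => x; apply/eqP; rewrite eqn0Ngt f0.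
have [y0 Exy gy0] := hall_condition_edge hfg fx0.
have [p tp] : exists p, is_transport (fun x => f x - (x == x0)) (fun y => g y - (y == y0)) p.
  apply: IH (hall_condition_pred1 hfg no_crit Exy fx0 gy0).
  by rewrite [X in _ < X](sum_subn_pred1 _ fx0) addn1.
exists (fun x y => p x y + (x == x0) * (y == y0)).
by apply: is_transportD tp (is_transport_pred1 Exy) => ? /=; rewrite subnK_pred1.
Qed.

End SupplyDemand.

Section HarrisKleitman.

Variable T : finType.

Definition antitone (h : {set T} -> nat) : Prop :=
  forall X Y : {set T}, X \subset Y -> h Y <= h X.

Definition up_closed (U : {set {set T}}) : Prop :=
  forall X Y : {set T}, X \subset Y -> X \in U -> Y \in U.

Lemma antitone_subset (h : {set T} -> nat) :
  (forall (A : {set T}) (i : T), h A <= h (A :\ i)) -> antitone h.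
Proof.
move=> h_step X Y; have [k] := ubnP #|Y|; elim: k Y => // k IH Y ltYk sXY.
have [<- //|neXY] := eqVneq X Y.
have /properP[_ [i iY iX]] : X \proper Y by rewrite properEneq neXY.
apply: leq_trans (h_step Y i) (IH _ _ _); last by rewrite subsetD1 sXY iX.
by have := cardsD1 i Y; rewrite iY /=; lia.
Qed.

Lemma sum_subsetU1 (a : T) (B : {set T}) (F : {set T} -> nat) : a \notin B ->
  \sum_(X : {set T} | X \subset a |: B) F X =
  \sum_(X : {set T} | X \subset B) F X + \sum_(X : {set T} | X \subset B) F (a |: X).
Proof.
move=> aB; rewrite (bigID (fun X : {set T} => a \in X)) /= addnC; congr (_ + _).
  by apply: eq_bigl => X; rewrite -{2}(setU1K aB) subsetD1.
rewrite (reindex_onto (fun X : {set T} => a |: X) (fun X => X :\ a)) /=; last first.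
  by move=> X /andP[_ aX]; rewrite setD1K.
apply: eq_bigl => X; rewrite setU11 andbT.
apply/andP/idP => [[sXB /eqP <-]|sXB]; first by rewrite -(setU1K aB) setSD.
have aX : a \notin X by apply: contra aB; apply: (subsetP sXB).
by rewrite setUS // setU1K.
Qed.

Lemma chebyshev2 (P0 P1 Q0 Q1 : nat) : P1 <= P0 -> Q0 <= Q1 ->
  2 * (P0 * Q0 + P1 * Q1) <= (P0 + P1) * (Q0 + Q1).
Proof. by nia. Qed.

Lemma leq_mean_split (N u e a b c F : nat) : 0 < N -> u + e = N ->
  N * a <= u * F -> F <= b + c -> N * c <= e * (b + c) -> a <= b.
Proof. by nia. Qed.

Lemma harris_subsets (A : {set T}) (phi psi : {set T} -> nat) :
  antitone phi -> (forall X Y : {set T}, X \subset Y -> psi X <= psi Y) ->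
  2 ^ #|A| * \sum_(X : {set T} | X \subset A) phi X * psi X <=
  (\sum_(X : {set T} | X \subset A) phi X) * \sum_(X : {set T} | X \subset A) psi X.
Proof.
have [k] := ubnP #|A|; elim: k A phi psi => // k IH A phi psi ltAk phi_anti psi_mono.
have [->|[a aA]] := set_0Vmem A.
  have sum0 (F : {set T} -> nat) : \sum_(X : {set T} | X \subset set0) F X = F set0.
    by apply: big_pred1 => X; exact: subset0.
  by rewrite cards0 !sum0 mul1n.
have aB : a \notin A :\ a by rewrite setD11.
have ltBk : #|A :\ a| < k by have := cardsD1 a A; rewrite aA /=; lia.
have IH0 := IH _ phi psi ltBk phi_anti psi_mono.
have IH1 := IH _ (fun X => phi (a |: X)) (fun X => psi (a |: X)) ltBk
  (fun X Y sXY => phi_anti _ _ (setUS _ sXY)) (fun X Y sXY => psi_mono _ _ (setUS _ sXY)).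
rewrite -(setD1K aA) cardsU1 aB add1n expnS -mulnA !sum_subsetU1 //=.
apply: leq_trans (chebyshev2 _ _); last 2 first.
- by apply: leq_sum => X _; apply: phi_anti; exact: subsetUr.
- by apply: leq_sum => X _; apply: psi_mono; exact: subsetUr.
by rewrite leq_pmul2l // mulnDr leq_add.
Qed.

Lemma upset_sum_le (U : {set {set T}}) (h : {set T} -> nat) :
  up_closed U -> antitone h -> 2 ^ #|T| * \sum_(X in U) h X <= #|U| * \sum_X h X.
Proof.
move=> U_up h_anti.
have ind_mono (X Y : {set T}) : X \subset Y -> (X \in U) <= (Y \in U).
  by case XU: (X \in U) => // sXY; rewrite (U_up X Y).
have sumT (F : {set T} -> nat) : \sum_(X : {set T} | X \subset setT) F X = \sum_X F X.
  by apply: eq_bigl => X; rewrite subsetT.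
have sum_ind : \sum_(X : {set T}) h X * (X \in U) = \sum_(X in U) h X.
  by rewrite [RHS]big_mkcond; apply: eq_bigr => X _; case: (X \in U); rewrite ?muln1 ?muln0.
have card_U : \sum_(X : {set T}) (X \in U) = #|U|.
  by rewrite -sum1_card [RHS]big_mkcond.
have := harris_subsets setT h_anti ind_mono.
by rewrite cardsT !sumT sum_ind card_U [_ * #|U|]mulnC.
Qed.

Lemma upset_sum_compl_le (f g : {set T} -> nat) (U : {set {set T}}) :
  antitone f -> antitone g -> \sum_X f X <= \sum_X g X -> up_closed U ->
  \sum_(X in U) f X <= \sum_(Y in [set Y : {set T} | ~: Y \in U]) g Y.
Proof.
move=> f_anti g_anti fg U_up; set D := [set Y : {set T} | ~: Y \in U].
have DC_up : up_closed (~: D).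
  by move=> X Y sXY; rewrite !inE; apply/contra/U_up; rewrite setCS.
have hf := upset_sum_le U_up f_anti.
have hg := upset_sum_le DC_up g_anti.
have card_D : #|D| + #|~: D| = 2 ^ #|T|.
  by rewrite cardsC -cardsT -powersetT card_powerset cardsT.
rewrite [#|D|](card_preimset U (@setC_inj T)) in card_D.
have split_g : \sum_X g X = \sum_(Y in D) g Y + \sum_(Y in ~: D) g Y.
  rewrite -(sum_restrictT D) -(sum_restrictT (~: D)) -big_split.
  by apply: eq_bigr => Y _; exact/esym/restrictC.
rewrite split_g in fg hg.
exact: leq_mean_split (expn_gt0 2 #|T|) card_D hf fg hg.
Qed.

Lemma hall_condition_disjoint (f g : {set T} -> nat) :
  antitone f -> antitone g -> \sum_X f X <= \sum_X g X ->
  hall_condition (fun X Y : {set T} => [disjoint X & Y]) f g.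
Proof.
move=> f_anti g_anti fg S.
pose U := [set X : {set T} | [exists X' in S, X' \subset X]].
have U_up : up_closed U.
  move=> X Y sXY; rewrite !inE => /existsP[X' /andP[X'S sX'X]].
  by apply/existsP; exists X'; rewrite X'S (subset_trans sX'X sXY).
have -> : neighbours (fun X Y : {set T} => [disjoint X & Y]) S = [set Y | ~: Y \in U].
  by apply/setP => Y; rewrite !inE; apply: eq_existsb => X; rewrite disjoints_subset.
apply: leq_trans (upset_sum_compl_le f_anti g_anti fg U_up).
apply: leq_sum_subset; apply/subsetP => X XS.
by rewrite inE; apply/existsP; exists X; rewrite XS subxx.
Qed.

End HarrisKleitman.

Theorem theorem2p1 (n : nat) (f g : {set 'I_n} -> nat) :
  monotone_dec f -> monotone_dec g -> fsize f <= fsize g ->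
  exists p : {set 'I_n} -> {set 'I_n} -> nat,
    [/\ (forall X Y : {set 'I_n}, p X Y != 0 -> [disjoint X & Y]),
        psize p = fsize f,
        (forall Y : {set 'I_n}, \sum_(X : {set 'I_n}) p X Y <= g Y) &
        (forall X : {set 'I_n}, \sum_(Y : {set 'I_n}) p X Y = f X)].
Proof.
move=> hf hg hfg.
have hall := hall_condition_disjoint (antitone_subset hf) (antitone_subset hg) hfg.
have [p [p_disj p_col p_row]] := hall_transport hall.
exists p; split=> //.
by rewrite /psize /fsize; apply: eq_bigr => X _; rewrite p_row.
Qed.
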